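(* Let $x_1,\dots,x_m$, $y_1,\dots,y_m$, $z_1,\dots,z_m$, $t_1,t_3$ be indeterminates and let $S_m$ act by permuting $x_1,\dots,x_m$ only. Then $$\sum_{w\in S_m}w\left(\frac{\prod_{j\ge2}(x_1-t_1y_j)\prod_{j\ge2}(z_1-t_3x_j)}{\prod_{j\ge2}(x_1-x_j)}\right)=(m-1)!\prod_{j\ge2}(z_1-t_1t_3y_j),$$ where all products run over $2\le j\le m$. *)

From HB Require Import structures.
From mathcomp Require Import all_boot all_order all_algebra all_fingroup.
Set Implicit Arguments. Unset Strict Implicit. Unset Printing Implicit Defensive.

(* Every summand depends on w only through a := w 0, and each a is hit by
   (m-1)! permutations, so the sum is (m-1)! times
   \sum_a f(x_a) \prod_(b != a) (z_1 - t_3 x_b) / \prod_(b != a) (x_a - x_b)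
   with f := \prod_(j >= 2) (X - t_1 y_j).  Since deg f < m this is the
   degree-(m-1) homogenization f^h(z_1, t_3) of the Lagrange interpolation
   f = \sum_a f(x_a) \prod_(b != a) (X - x_b) / \prod_(b != a) (x_a - x_b),
   and f^h(z_1, t_3) = \prod_(j >= 2) (z_1 - t_1 t_3 y_j). *)

From HB Require Import structures.
From mathcomp Require Import all_boot all_order all_algebra all_fingroup.
Set Implicit Arguments.
Unset Strict Implicit.
Unset Printing Implicit Defensive.

Import GRing.Theory.
Local Open Scope ring_scope.

Lemma card_perm_at (T : finType) (a b : T) :
  #|[pred s : {perm T} | s a == b]| = (#|T|.-1)`!.
Proof.
have card_fix : #|[pred s : {perm T} | s a == a]| = (#|T|.-1)`!.
  rewrite -(cardsC1 a) -card_perm; apply: eq_card => s; rewrite !inE.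
  apply/eqP/subsetP => [sa i | /(_ a)]; rewrite !inE.
    by apply: contra => /eqP ->; rewrite sa.
  by rewrite eqxx; case: eqP => // _ /(_ isT).
rewrite -card_fix -!sum1_card (reindex_inj (mulIg (tperm a b))) /=.
apply: eq_bigl => s; rewrite !inE permM -[X in _ == X](tpermL a b).
by rewrite (inj_eq perm_inj).
Qed.

Lemma sum_perm_at (V : zmodType) (T : finType) (a : T) (G : T -> V) :
  \sum_(s : {perm T}) G (s a) = (\sum_b G b) *+ (#|T|.-1)`!.
Proof.
rewrite (partition_big (fun s : {perm T} => s a) predT) //= -sumrMnl.
apply: eq_bigr => b _; rewrite (eq_bigr (fun=> G b)) => [|s /eqP -> //].
by rewrite sumr_const card_perm_at.
Qed.

Lemma prod_perm_neq (R : comNzRingType) (T : finType) (s : {perm T}) (a : T)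
    (h : T -> R) :
  \prod_(j | j != a) h (s j) = \prod_(b | b != s a) h b.
Proof.
rewrite [RHS](reindex_inj (@perm_inj _ s)) /=.
by apply: eq_bigl => j; rewrite (inj_eq perm_inj).
Qed.

Section Homogenization.
Context {R : comNzRingType}.

Definition homog (n : nat) (p : {poly R}) (z t : R) : R :=
  \sum_(i < n.+1) p`_i * z ^+ i * t ^+ (n - i).

Lemma homog_sum (I : finType) n (c : I -> R) (p : I -> {poly R}) z t :
  homog n (\sum_i c i *: p i) z t = \sum_i c i * homog n (p i) z t.
Proof.
rewrite /homog; under [RHS]eq_bigr => i _ do rewrite mulr_sumr.
rewrite exchange_big; apply: eq_bigr => k _.
rewrite coef_sum !mulr_suml; apply: eq_bigr => i _.
by rewrite coefZ !mulrA.
Qed.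

Lemma homog_t0 n p z : homog n p z 0 = p`_n * z ^+ n.
Proof.
rewrite /homog big_ord_recr /= subnn expr0 mulr1 big1 ?add0r // => i _.
by rewrite expr0n subn_eq0 leqNgt ltn_ord mulr0.
Qed.

End Homogenization.

Lemma homog_unit (F : fieldType) n (p : {poly F}) z t :
  (size p <= n.+1)%N -> t != 0 -> homog n p z t = t ^+ n * p.[z / t].
Proof.
move=> sp t0; rewrite (horner_coef_wide _ sp) mulr_sumr; apply: eq_bigr => i _.
by rewrite exprB ?unitfE // ?(ltnSE (ltn_ord i)) // expr_div_n mulrCA !mulrA.
Qed.

Section Interpolation.
Variables (F : fieldType) (I : finType).

Lemma size_prod_XsubC_pred (P : pred I) (c : I -> F) :
  size (\prod_(i | P i) ('X - (c i)%:P)) = #|P|.+1.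
Proof. by rewrite -big_filter size_prod_XsubC cardE. Qed.

Lemma homog_prod_XsubC (P : pred I) (c : I -> F) z t :
  homog #|P| (\prod_(i | P i) ('X - (c i)%:P)) z t =
  \prod_(i | P i) (z - t * c i).
Proof.
have [->|t0] := eqVneq t 0.
  rewrite homog_t0 (eq_bigr (fun=> z)) => [|i _]; last by rewrite mul0r subr0.
  have := lead_coef_prod_XsubC (index_enum I) P c.
  by rewrite /lead_coef size_prod_XsubC_pred => ->; rewrite mul1r prodr_const.
rewrite homog_unit ?size_prod_XsubC_pred // horner_prod -prodrMl.
by apply: eq_bigr => i _; rewrite hornerXsubC mulrBr mulrC divfK.
Qed.

Variable x : I -> F.
Hypothesis x_inj : injective x.

Lemma horner_prod_XsubC_neq (a c : I) :
  (\prod_(b | b != a) ('X - (x b)%:P)).[x c] =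
  if c == a then \prod_(b | b != a) (x a - x b) else 0.
Proof.
rewrite horner_prod; case: eqP => [->|/eqP ca].
  by apply: eq_bigr => b _; rewrite hornerXsubC.
by rewrite (bigD1 c) //= hornerXsubC subrr mul0r.
Qed.

Lemma lagrange_interpolation (f : {poly F}) : (size f <= #|I|)%N ->
  \sum_a (f.[x a] / \prod_(b | b != a) (x a - x b)) *:
      \prod_(b | b != a) ('X - (x b)%:P) = f.
Proof.
move=> sf; set g := \sum_a _.
have den_neq0 a : \prod_(b | b != a) (x a - x b) != 0.
  by apply/prodf_neq0 => b ba; rewrite subr_eq0 (inj_eq x_inj) eq_sym.
have g_x c : g.[x c] = f.[x c].
  rewrite horner_sum (bigD1 c) //= hornerZ horner_prod_XsubC_neq eqxx divfK //.
  rewrite big1 ?addr0 // => a ac.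
  by rewrite hornerZ horner_prod_XsubC_neq eq_sym (negbTE ac) mulr0.
have size_g : (size g <= #|I|)%N.
  apply: leq_trans (size_sum _ _ _) _; apply/bigmax_leqP => a _.
  apply: leq_trans (size_scale_leq _ _) _.
  by rewrite size_prod_XsubC_pred cardC1 prednK //; apply/card_gt0P; exists a.
apply/eqP; rewrite -subr_eq0; apply/negPn/negP => gf_neq0.
have := max_poly_roots gf_neq0 (rs := [seq x i | i <- enum I]).
rewrite map_inj_uniq ?enum_uniq // size_map -cardE.
have -> : all (root (g - f)) [seq x i | i <- enum I].
  by apply/allP => _ /mapP [c _ ->]; rewrite rootE hornerD hornerN g_x subrr.
move=> /(_ isT isT); apply/negP; rewrite -leqNgt.
by apply: leq_trans (size_polyD _ _) _; rewrite size_polyN geq_max size_g.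
Qed.

End Interpolation.

Theorem lemma5p7 (F : fieldType) (m : nat)
  (x y z : 'I_m.+1 -> F) (t1 t3 : F) (hx : injective x) :
  \sum_(w : 'S_m.+1)
     ((\prod_(j : 'I_m.+1 | j != ord0) (x (w ord0) - t1 * y j)) *
      (\prod_(j : 'I_m.+1 | j != ord0) (z ord0 - t3 * x (w j))) /
      (\prod_(j : 'I_m.+1 | j != ord0) (x (w ord0) - x (w j))))
  = (m`!)%:R * \prod_(j : 'I_m.+1 | j != ord0) (z ord0 - t1 * t3 * y j).
Proof.
set f := \prod_(j : 'I_m.+1 | j != ord0) ('X - (t1 * y j)%:P).
have f_horner c : f.[c] = \prod_(j | j != ord0) (c - t1 * y j).
  by rewrite horner_prod; apply: eq_bigr => j _; rewrite hornerXsubC.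
have card_neq (a : 'I_m.+1) : #|(fun b => b != a)| = m by rewrite cardC1 card_ord.
pose G a := f.[x a] / \prod_(b | b != a) (x a - x b) *
            \prod_(b | b != a) (z ord0 - t3 * x b).
rewrite (eq_bigr (fun w : 'S_m.+1 => G (w ord0))) => [|w _]; last first.
  rewrite /G f_horner (prod_perm_neq w ord0 (fun b => z ord0 - t3 * x b)).
  by rewrite (prod_perm_neq w ord0 (fun b => x (w ord0) - x b)) mulrAC.
rewrite (sum_perm_at ord0 G) card_ord mulr_natl; congr (_ *+ _).
have <- : homog m f (z ord0) t3 = \prod_(j | j != ord0) (z ord0 - t1 * t3 * y j).
  rewrite -[X in homog X](card_neq ord0) homog_prod_XsubC.
  by apply: eq_bigr => j _; rewrite mulrCA mulrA.
rewrite -[in RHS](lagrange_interpolation hx (f := f)); last first.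
  by rewrite size_prod_XsubC_pred card_neq card_ord.
rewrite homog_sum; apply: eq_bigr => a _.
by rewrite -[X in homog X](card_neq a) homog_prod_XsubC.
Qed.
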